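(* Let $p\equiv1\pmod5$ be prime and let $\psi$ be a character of order $5$ of $\mathbb{F}_p^*$. If $a,b,c\in\mathbb{Z}$ satisfy $a+c\not\equiv0\pmod5$ and $b+c\not\equiv0\pmod5$, then \[ \sum_{\chi}g(\bar\chi\psi^a)\,g(\bar\chi\psi^b)\,g(\chi\psi^c)\,g(\chi\bar\psi^{\,a+b+c})=-p(p-1), \] where the sum runs over all multiplicative characters $\chi$ of $\mathbb{F}_p^*$.
   Context: Multiplicative characters of $\mathbb{F}_p^*$ are regarded as maps $\mathbb{F}_p^*\to\mathbb{Z}_p^*$ (with values in the $(p-1)$-th roots of unity) and extended to $\mathbb{F}_p$ by $\chi(0):=0$, including for the trivial character; $\bar\chi$ denotes the inverse character. Fix a primitive $p$-th root of unity $\zeta_p\in\overline{\mathbb{Q}_p}$ and let $\theta(x):=\zeta_p^{x}$ for $x\in\mathbb{F}_p$. The Gauss sum of a character $\chi$ is $g(\chi):=\sum_{x\in\mathbb{F}_p}\chi(x)\theta(x)$. *)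

From HB Require Import structures.
From mathcomp Require Import all_boot all_order all_algebra all_field.
Set Implicit Arguments. Unset Strict Implicit. Unset Printing Implicit Defensive.
Import Order.TTheory GRing.Theory Num.Theory.
Local Open Scope ring_scope.

(* A multiplicative character of F_p^*, extended to F_p by chi(0) := 0. *)
Definition is_mulchar (p : nat) (chi : {ffun 'F_p -> algC}) : Prop :=
  [/\ chi 0 = 0, chi 1 = 1 & forall x y : 'F_p, chi (x * y) = chi x * chi y].

Definition trivchar (p : nat) : {ffun 'F_p -> algC} :=
  [ffun x => if x == 0 then 0 else 1].

Definition charpow (p : nat) (chi : {ffun 'F_p -> algC}) (a : int)
  : {ffun 'F_p -> algC} :=
  [ffun x => if x == 0 then 0 else chi x ^ a].

Definition charinv (p : nat) (chi : {ffun 'F_p -> algC}) := charpow chi (-1).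

Definition charmul (p : nat) (chi1 chi2 : {ffun 'F_p -> algC})
  : {ffun 'F_p -> algC} := [ffun x => chi1 x * chi2 x].

Definition char_order (p : nat) (chi : {ffun 'F_p -> algC}) (n : nat) : Prop :=
  charpow chi n%:Z = trivchar p /\
  forall k : nat, (0 < k < n)%N -> charpow chi k%:Z <> trivchar p.

Definition gauss (p : nat) (zeta : algC) (chi : {ffun 'F_p -> algC}) : algC :=
  \sum_(x : 'F_p) chi x * zeta ^+ (x : nat).

(* Expanding the four Gauss sums and summing over chi by orthogonality,
   sum_chi chi(v) = (p-1)[v = 1], leaves p-1 times the sum over x y = z w.
   The substitution x = z u, y = z v, w = z u v turns the summand into
   E(u) F(v) zeta^(z (1+u) (1+v)), with E = psi^-(b+c) and F = psi^-(a+c),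
   because psi^a psi^b psi^c psi^-(a+b+c) is trivial.  Summing zeta over
   z <> 0 gives p [(1+u)(1+v) = 0] - 1, so the total is
   (p-1) (p (E(-1) sum F + F(-1) sum E - E(-1) F(-1)) - sum E sum F).
   The hypotheses on a+c and b+c make E and F nontrivial, so their sums
   vanish, and psi(-1) = 1 because psi has odd order: this leaves -p(p-1). *)

From mathcomp Require Import all_boot all_order all_algebra all_field.
From mathcomp Require Import cyclic ring.
Import Order.TTheory GRing.Theory Num.Theory.

Set Implicit Arguments.
Unset Strict Implicit.
Unset Printing Implicit Defensive.

Local Open Scope ring_scope.

Lemma mulr_fixed_eq0 (R : idomainType) (k x : R) : k != 1 -> k * x = x -> x = 0.
Proof.
move=> k_neq1 /eqP; rewrite -subr_eq0 -[X in _ - X]mul1r -mulrBl mulf_eq0 subr_eq0.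
by rewrite (negPf k_neq1) => /eqP.
Qed.

Lemma sum_mulfun_eq0 (F : finFieldType) (R : idomainType) (f : F -> R) (u : F) :
  {morph f : x y / x * y} -> u != 0 -> f u != 1 -> \sum_x f x = 0.
Proof.
move=> fM u_neq0 fu_neq1; apply: (mulr_fixed_eq0 fu_neq1).
rewrite mulr_sumr [RHS](reindex_inj (mulfI u_neq0)).
by apply: eq_bigr => x _; rewrite fM.
Qed.

Lemma sumr_cross (I J : finType) (R : zmodType) (G : I -> J -> R) (i0 : I) (j0 : J) :
  \sum_i \sum_j (if (i == i0) || (j == j0) then G i j else 0)
    = \sum_j G i0 j + \sum_i G i j0 - G i0 j0.
Proof.
rewrite (bigD1 i0) //= (eq_bigr (G i0)) => [|j _]; last by rewrite eqxx.
rewrite (eq_bigr (fun i => G i j0)) => [|i /negPf i_neq]; last first.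
  by rewrite i_neq /= -big_mkcond big_pred1_eq.
by rewrite [in RHS](bigD1 i0) //= [G i0 j0 + _]addrC addrA addrK.
Qed.

Lemma expf_card_pred (F : finFieldType) (x : F) : x != 0 -> x ^+ #|F|.-1 = 1.
Proof.
move=> x_neq0; apply: (mulIf x_neq0).
by rewrite mul1r -exprSr prednK ?expf_card // (ltn_trans _ (finNzRing_gt1 F)).
Qed.

Lemma finField_prim_root_exists (F : finFieldType) :
  exists g : F, #|F|.-1.-primitive_root g.
Proof.
have n_gt0 : (0 < #|F|.-1)%N by rewrite -ltnS prednK ?finNzRing_gt1 // ltnW ?finNzRing_gt1.
have /hasP[g _ g_prim] : has #|F|.-1.-primitive_root (enum (predC1 (0 : F))).
  apply: has_prim_root => //; last by rewrite -cardE cardC1.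
    by apply/allP => x; rewrite mem_enum unity_rootE => /expf_card_pred ->.
  exact: enum_uniq.
by exists g.
Qed.

Section MulChar.

Variable p : nat.
Implicit Types (chi psi : {ffun 'F_p -> algC}) (x y : 'F_p) (m n : int).

Lemma mulchar_neq0 chi x : is_mulchar chi -> x != 0 -> chi x != 0.
Proof.
move=> [_ chi1 chiM] x_neq0; apply: contra_eq_neq chi1 => chix0.
by rewrite -(mulfV x_neq0) chiM chix0 mul0r eq_sym oner_eq0.
Qed.

Lemma mulchar_unit chi x : is_mulchar chi -> x != 0 -> chi x \is a GRing.unit.
Proof. by move=> chiP x_neq0; rewrite unitfE mulchar_neq0. Qed.

Lemma mulcharV chi x : is_mulchar chi -> chi x^-1 = (chi x)^-1.
Proof.
move=> chiP; have [chi0 chi1 chiM] := chiP.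
have [->|x_neq0] := eqVneq x 0; first by rewrite invr0 chi0 invr0.
apply: (mulfI (mulchar_neq0 chiP x_neq0)).
by rewrite -chiM mulfV // divff ?mulchar_neq0.
Qed.

Lemma trivchar_mulchar : is_mulchar (trivchar p).
Proof.
split=> [||x y]; rewrite !ffunE ?eqxx ?oner_eq0 // mulf_eq0.
by case: (x == 0); case: (y == 0); rewrite ?mulr0 ?mulr1.
Qed.

Lemma charpowE chi m x : x != 0 -> charpow chi m x = chi x ^ m.
Proof. by move=> x_neq0; rewrite ffunE (negPf x_neq0). Qed.

Lemma charpow0 chi : charpow chi 0 = trivchar p.
Proof. by apply/ffunP => x; rewrite !ffunE expr0z. Qed.

Lemma charpow_mulchar chi m : is_mulchar chi -> is_mulchar (charpow chi m).
Proof.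
move=> [_ chi1 chiM]; split=> [||x y]; rewrite !ffunE ?eqxx ?oner_eq0 ?chi1 ?exp1rz //.
by rewrite mulf_eq0; case: (x == 0); case: (y == 0); rewrite ?mul0r ?mulr0 // chiM expfzMl.
Qed.

Lemma charmul_mulchar chi psi :
  is_mulchar chi -> is_mulchar psi -> is_mulchar (charmul chi psi).
Proof.
move=> [chi0 chi1 chiM] [_ psi1 psiM]; split=> [||x y]; rewrite !ffunE.
- by rewrite chi0 mul0r.
- by rewrite chi1 psi1 mulr1.
- by rewrite chiM psiM mulrACA.
Qed.

Lemma charmul_charpow chi m n :
  is_mulchar chi -> charmul (charpow chi m) (charpow chi n) = charpow chi (m + n).
Proof.
move=> chiP; apply/ffunP => x; rewrite !ffunE.
by case: eqVneq => [_|x_neq0]; rewrite ?mul0r // exprzDr ?mulchar_unit.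
Qed.

Lemma sum_mulchar_eq0 chi :
  is_mulchar chi -> chi != trivchar p -> \sum_x chi x = 0.
Proof.
move=> [chi0 _ chiM] chi_neq1.
have [u /andP[u_neq0 chiu_neq1]] : exists u, (u != 0) && (chi u != 1).
  apply/existsP; apply: contraNT chi_neq1 => /existsPn chi_triv.
  apply/eqP/ffunP => x; rewrite ffunE; have [->//|x_neq0] := eqVneq x 0.
  by apply/eqP; move: (chi_triv x); rewrite x_neq0 negbK.
exact: (sum_mulfun_eq0 chiM u_neq0 chiu_neq1).
Qed.

Lemma charpow_neq_triv psi (n : nat) m : (0 < n)%N ->
  char_order psi n -> is_mulchar psi -> ~~ (n%:Z %| m)%Z -> charpow psi m != trivchar p.
Proof.
move=> n_gt0 [psi_n psi_min] psiP n_ndvd_m.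
pose k := `|(m %% n)%Z|%N.
have k_def : k%:Z = (m %% n)%Z by rewrite gez0_abs ?modz_ge0 // eqz_nat -lt0n.
have k_gt0 : (0 < k)%N.
  by rewrite lt0n -eqz_nat k_def; apply: contra n_ndvd_m => /eqP/dvdz_mod0P.
have k_lt_n : (k < n)%N by rewrite -ltz_nat k_def ltz_pmod.
apply/eqP => psi_m_triv; apply: (psi_min k); first by rewrite k_gt0.
rewrite -psi_m_triv; apply/ffunP => x; rewrite !ffunE; case: eqP => // /eqP x_neq0.
have psix_n : psi x ^ n%:Z = 1.
  by move/ffunP: psi_n => /(_ x); rewrite !ffunE (negPf x_neq0).
rewrite [in RHS](divz_eq m n) exprzDr ?mulchar_unit // -k_def.
by rewrite [X in psi x ^ X * _]mulrC -exprz_exp psix_n exp1rz mul1r.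
Qed.

Lemma mulchar_oppr1 psi (n : nat) :
  is_mulchar psi -> char_order psi n -> odd n -> psi (-1) = 1.
Proof.
move=> [_ psi1 psiM] [psi_n _] n_odd.
have psi_sq : psi (-1) ^+ 2 = 1 by rewrite expr2 -psiM mulrNN mulr1 psi1.
have psi_n1 : psi (-1) ^+ n = 1.
  by move/ffunP: psi_n => /(_ (-1)); rewrite !ffunE oppr_eq0 oner_eq0.
rewrite -psi_n1 -(odd_double_half n) n_odd exprD expr1 -muln2 mulnC exprM.
by rewrite psi_sq expr1n mulr1.
Qed.

End MulChar.

Section Orthogonality.

Variables (p : nat) (s : seq {ffun 'F_p -> algC}).
Hypotheses (p_pr : prime p) (s_uniq : uniq s)
  (s_mulchar : forall chi, chi \in s <-> is_mulchar chi).

Lemma sum_trivchar : \sum_(x : 'F_p) trivchar p x = p.-1%:R.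
Proof.
rewrite (bigD1 0) //= ffunE eqxx add0r (eq_bigr (fun _ => 1)).
  by rewrite sumr_const cardC1 card_Fp.
by move=> x /negPf x_neq0; rewrite ffunE x_neq0.
Qed.

(* A discrete logarithm to a generator g of F_p^*, composed with a primitive
   (p-1)-th root of unity in algC. *)
Lemma faithful_mulchar_exists : exists2 chi : {ffun 'F_p -> algC},
  is_mulchar chi & forall x, x != 0 -> (chi x == 1) = (x == 1).
Proof.
have [g] := finField_prim_root_exists 'F_p; rewrite card_Fp // => g_prim.
have p1_gt0 : (0 < p.-1)%N by rewrite ltn_predRL prime_gt1.
have [w w_prim] := C_prim_root_exists p1_gt0.
pose dlog x : nat := oapp val 0%N [pick i : 'I_p.-1 | g ^+ i == x].
have dlogK x : x != 0 -> g ^+ dlog x = x.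
  move=> x_neq0; rewrite /dlog; case: pickP => [i /eqP //|no_i].
  have := expf_card_pred x_neq0; rewrite card_Fp // => /(prim_rootP g_prim)[i /esym/eqP].
  by rewrite no_i.
pose chi := [ffun x : 'F_p => if x == 0 then 0 else w ^+ dlog x].
have chiE x : x != 0 -> chi x = w ^+ dlog x by move=> x_neq0; rewrite ffunE (negPf x_neq0).
have chi_eq x y : x != 0 -> y != 0 -> (chi x == chi y) = (x == y).
  move=> x_neq0 y_neq0; rewrite !chiE // (eq_prim_root_expr w_prim).
  by rewrite -(eq_prim_root_expr g_prim) !dlogK.
have chi1 : chi 1 = 1.
  apply/eqP; rewrite chiE ?oner_neq0 // -(expr0 w) (eq_prim_root_expr w_prim).
  by rewrite -(eq_prim_root_expr g_prim) dlogK ?oner_neq0 ?expr0.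
exists chi; last by move=> x x_neq0; rewrite -{1}chi1 chi_eq ?oner_neq0.
split=> // [|x y]; first by rewrite ffunE eqxx.
have [->|x_neq0] := eqVneq x 0; first by rewrite !(mul0r, ffunE, eqxx).
have [->|y_neq0] := eqVneq y 0; first by rewrite mulr0 [chi 0]ffunE eqxx mulr0.
apply/eqP; rewrite !chiE ?mulf_neq0 // -exprD (eq_prim_root_expr w_prim).
by rewrite -(eq_prim_root_expr g_prim) exprD !dlogK ?mulf_neq0.
Qed.

Lemma perm_charmul chi0 : is_mulchar chi0 -> perm_eq (map (charmul chi0) s) s.
Proof.
move=> chi0P.
have mul_inj : {in s &, injective (charmul chi0)}.
  move=> chi1 chi2 /s_mulchar[chi10 _ _] /s_mulchar[chi20 _ _] /ffunP eq12.
  apply/ffunP => x; have := eq12 x; rewrite !ffunE.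
  have [->|x_neq0] := eqVneq x 0; first by rewrite chi10 chi20.
  exact/mulfI/mulchar_neq0.
have mul_sub : {subset map (charmul chi0) s <= s}.
  by move=> _ /mapP[chi /s_mulchar chiP ->]; apply/s_mulchar/charmul_mulchar.
have map_uniq : uniq (map (charmul chi0) s) by rewrite map_inj_in_uniq.
have [|_ map_eq] := uniq_min_size map_uniq mul_sub; first by rewrite size_map.
exact: uniq_perm.
Qed.

Lemma sum_mulchar_neq1 v : v != 1 -> \sum_(chi <- s) chi v = 0.
Proof.
move=> v_neq1; have [->|v_neq0] := eqVneq v 0.
  by rewrite big_seq big1 // => chi /s_mulchar[].
have [chi0 chi0P chi0_faithful] := faithful_mulchar_exists.
apply: (mulr_fixed_eq0 (k := chi0 v)); first by rewrite chi0_faithful.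
rewrite mulr_sumr -[RHS](perm_big _ (perm_charmul chi0P)) big_map.
by apply: eq_bigr => chi _; rewrite ffunE.
Qed.

Lemma sum_mulchar_at1 : \sum_(chi <- s) chi 1 = (size s)%:R.
Proof.
rewrite big_seq (eq_bigr (fun=> 1)) -?big_seq => [|chi /s_mulchar[] //].
by rewrite -sum1_size natr_sum.
Qed.

(* Sum all values of all characters, first over the characters, then over F_p. *)
Lemma size_mulchars : size s = p.-1.
Proof.
have sum_rows : \sum_v \sum_(chi <- s) chi v = (size s)%:R.
  rewrite (bigD1 1) //= [X in _ + X]big1 ?addr0 => [|v]; last exact: sum_mulchar_neq1.
  exact: sum_mulchar_at1.
have triv_in_s : trivchar p \in s by apply/s_mulchar/trivchar_mulchar.
rewrite exchange_big (bigD1_seq _ triv_in_s s_uniq) /= sum_trivchar big1_seq in sum_rows.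
  by apply/eqP; rewrite -(eqr_nat algC) -sum_rows addr0.
by move=> chi /andP[chi_ntriv /s_mulchar chiP]; apply: sum_mulchar_eq0.
Qed.

Lemma sum_mulchar v : \sum_(chi <- s) chi v = if v == 1 then p.-1%:R else 0.
Proof.
have [->|/sum_mulchar_neq1 //] := eqVneq v 1.
by rewrite sum_mulchar_at1 size_mulchars.
Qed.

End Orthogonality.

Section AddChar.

Variables (p : nat) (zeta : algC).
Hypotheses (p_pr : prime p) (zeta_prim : p.-primitive_root zeta).

Lemma expr_Fp_add (x y : 'F_p) : zeta ^+ ((x + y)%R : 'F_p) = zeta ^+ x * zeta ^+ y.
Proof.
rewrite -exprD -[RHS](prim_expr_mod zeta_prim).
have -> : x + y = ((x : nat) + y)%:R :> 'F_p by rewrite natrD !natr_Zp.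
by rewrite val_Fp_nat.
Qed.

Lemma sum_expr_Fp : \sum_(x : 'F_p) zeta ^+ x = 0.
Proof.
have val1 : ((1%R : 'F_p) : nat) = 1%N.
  by rewrite -[1]/(1%:R) val_Fp_nat // modn_small ?prime_gt1.
apply: (mulr_fixed_eq0 (k := zeta ^+ (1%R : 'F_p))).
  by rewrite val1 -(prim_order_dvd zeta_prim) dvdn1 neq_ltn prime_gt1 ?orbT.
rewrite mulr_sumr [RHS](reindex_inj (addrI 1)).
by apply: eq_bigr => x _; rewrite expr_Fp_add.
Qed.

Lemma sum_expr_Fp_scale (k : 'F_p) :
  \sum_(z | z != 0) zeta ^+ ((z * k)%R : 'F_p) = (if k == 0 then p%:R else 0) - 1.
Proof.
have sum_all : \sum_z zeta ^+ ((z * k)%R : 'F_p) = if k == 0 then p%:R else 0.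
  have [->|k_neq0] := eqVneq k 0.
    by under eq_bigr do rewrite mulr0 expr0; rewrite sumr_const card_Fp.
  rewrite (reindex_inj (mulIf (invr_neq0 k_neq0))) -[RHS]sum_expr_Fp.
  by apply: eq_bigr => z _; rewrite mulfVK.
by rewrite -sum_all [in RHS](bigD1 0) // mul0r expr0 addrC addKr.
Qed.

End AddChar.

Lemma mulr_sum4 (R : comNzRingType) (I : finType) (F1 F2 F3 F4 : I -> R) :
  (\sum_x F1 x) * (\sum_y F2 y) * (\sum_z F3 z) * (\sum_w F4 w)
    = \sum_x \sum_y \sum_z \sum_w F1 x * F2 y * F3 z * F4 w.
Proof.
rewrite -!mulrA mulr_suml; apply: eq_bigr => x _.
rewrite mulr_suml mulr_sumr; apply: eq_bigr => y _.
rewrite mulr_suml !mulr_sumr; apply: eq_bigr => z _.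
by rewrite !mulr_sumr; apply: eq_bigr => w _; rewrite !mulrA.
Qed.

Section FourGaussSums.

Variables (p : nat) (zeta : algC) (s : seq {ffun 'F_p -> algC}).
Variables A B C D : {ffun 'F_p -> algC}.
Hypotheses (p_pr : prime p) (zeta_prim : p.-primitive_root zeta).
Hypotheses (s_uniq : uniq s) (s_mulchar : forall chi, chi \in s <-> is_mulchar chi).
Hypotheses (AP : is_mulchar A) (BP : is_mulchar B) (CP : is_mulchar C) (DP : is_mulchar D).
Hypothesis ABCD_triv : charmul (charmul A B) (charmul C D) = trivchar p.

Let summand (x y z w : 'F_p) : algC :=
  A x * B y * C z * D w * (zeta ^+ x * zeta ^+ y * zeta ^+ z * zeta ^+ w).

Lemma gauss4_expand chi : is_mulchar chi ->
  gauss zeta (charmul (charinv chi) A) * gauss zeta (charmul (charinv chi) B)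
    * gauss zeta (charmul chi C) * gauss zeta (charmul chi D)
  = \sum_x \sum_y \sum_z \sum_w summand x y z w * chi (z * w / (x * y)).
Proof.
move=> chiP; rewrite /gauss mulr_sum4.
apply: eq_bigr => x _; apply: eq_bigr => y _; apply: eq_bigr => z _; apply: eq_bigr => w _.
have [A0 _ _] := AP; have [B0 _ _] := BP; have [_ _ chiM] := chiP.
rewrite /summand !ffunE.
have [->|x_neq0] := eqVneq x 0; first by rewrite A0 !(mulr0, mul0r).
have [->|y_neq0] := eqVneq y 0; first by rewrite B0 !(mulr0, mul0r).
by rewrite chiM mulcharV // !chiM invfM !exprN1; ring.
Qed.

Lemma sum_summand_fiber x y z :
  \sum_w (if z * w / (x * y) == 1 then summand x y z w else 0) = summand x y z (x * y / z).
Proof.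
have [A0 _ _] := AP; have [B0 _ _] := BP; have [C0 _ _] := CP.
have summand0 w : (x == 0) || (y == 0) || (z == 0) -> summand x y z w = 0.
  by case/orP=> [/orP[]|] /eqP->; rewrite /summand ?A0 ?B0 ?C0 !(mulr0, mul0r).
have [xyz0|] := boolP ((x == 0) || (y == 0) || (z == 0)).
  by rewrite summand0 // big1 // => w _; case: ifP => // _; rewrite summand0.
rewrite !negb_or => /andP[/andP[x_neq0 y_neq0] z_neq0].
rewrite -big_mkcond (big_pred1 (x * y / z)) // => w /=.
apply/eqP/eqP => [fiber_w | ->]; last by rewrite [z * _]mulrC divfK // divff ?mulf_neq0.
have zw_eq : z * w = x * y by rewrite -[RHS]mul1r -fiber_w divfK ?mulf_neq0.
by rewrite -zw_eq mulrC mulKf.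
Qed.

Lemma sum_gauss4_fiber :
  \sum_(chi <- s)
     gauss zeta (charmul (charinv chi) A) * gauss zeta (charmul (charinv chi) B)
   * gauss zeta (charmul chi C) * gauss zeta (charmul chi D)
  = p.-1%:R * \sum_x \sum_y \sum_z summand x y z (x * y / z).
Proof.
rewrite (eq_big_seq _ (fun chi chi_s => gauss4_expand (iffLR (s_mulchar chi) chi_s))).
rewrite exchange_big mulr_sumr; apply: eq_bigr => x _.
rewrite exchange_big mulr_sumr; apply: eq_bigr => y _.
rewrite exchange_big mulr_sumr; apply: eq_bigr => z _.
rewrite exchange_big -(sum_summand_fiber x y z) mulr_sumr; apply: eq_bigr => w _.
by rewrite -mulr_sumr sum_mulchar //; case: eqP => _; rewrite ?mulr0 // mulrC.
Qed.

Lemma summand_rescale z u v : z != 0 ->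
  summand (z * u) (z * v) z (z * u * (z * v) / z)
    = charmul A D u * charmul B D v * zeta ^+ ((z * ((1 + u) * (1 + v)))%R : 'F_p).
Proof.
move=> z_neq0; have [_ _ AM] := AP; have [_ _ BM] := BP; have [_ _ DM] := DP.
have ABCD_z : A z * B z * (C z * D z) = 1.
  by move/ffunP: ABCD_triv => /(_ z); rewrite !ffunE (negPf z_neq0).
have -> : z * u * (z * v) / z = z * (u * v) by field.
have -> : z * ((1 + u) * (1 + v)) = z * u + z * v + z + z * (u * v) by ring.
rewrite /summand !(expr_Fp_add p_pr zeta_prim) !ffunE !AM !BM !DM -[RHS]mul1r -ABCD_z.
ring.
Qed.

Lemma sum_fiber_rescale :
  \sum_x \sum_y \sum_z summand x y z (x * y / z)
    = \sum_(z | z != 0) \sum_u \sum_v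
        charmul A D u * charmul B D v * zeta ^+ ((z * ((1 + u) * (1 + v)))%R : 'F_p).
Proof.
under eq_bigr do rewrite exchange_big.
rewrite exchange_big [RHS]big_mkcond; apply: eq_bigr => z _.
have [->|z_neq0] := eqVneq z 0.
  have [C0 _ _] := CP.
  by rewrite big1 // => x _; rewrite big1 // => y _; rewrite /summand C0 !(mulr0, mul0r).
rewrite (reindex_inj (mulfI z_neq0)); apply: eq_bigr => u _.
rewrite (reindex_inj (mulfI z_neq0)); apply: eq_bigr => v _.
exact: summand_rescale.
Qed.

Lemma sum_rescaled_eval :
  \sum_(z | z != 0) \sum_u \sum_v
      charmul A D u * charmul B D v * zeta ^+ ((z * ((1 + u) * (1 + v)))%R : 'F_p)
    = p%:R * (charmul A D (-1) * \sum_v charmul B D v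
              + (\sum_u charmul A D u) * charmul B D (-1)
              - charmul A D (-1) * charmul B D (-1))
      - (\sum_u charmul A D u) * (\sum_v charmul B D v).
Proof.
set E := charmul A D; set F := charmul B D.
rewrite exchange_big; under eq_bigr do rewrite exchange_big.
have axes (u v : 'F_p) : ((1 + u) * (1 + v) == 0) = (u == -1) || (v == -1).
  by rewrite mulf_eq0 ![1 + _]addrC !addr_eq0.
under eq_bigr => u _ do under eq_bigr => v _ do
  rewrite -mulr_sumr (sum_expr_Fp_scale p_pr zeta_prim) axes.
transitivity (p%:R * \sum_u \sum_v (if (u == -1) || (v == -1) then E u * F v else 0)
              - \sum_u \sum_v E u * F v).
  rewrite mulr_sumr -sumrB; apply: eq_bigr => u _.
  rewrite mulr_sumr -sumrB; apply: eq_bigr => v _.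
  by case: ifP => _; ring.
have cross := sumr_cross (fun u v => E u * F v) (-1) (-1); cbv beta in cross.
by rewrite cross -big_distrlr -mulr_sumr -mulr_suml.
Qed.

Theorem sum_gauss4 :
  \sum_(chi <- s)
     gauss zeta (charmul (charinv chi) A) * gauss zeta (charmul (charinv chi) B)
   * gauss zeta (charmul chi C) * gauss zeta (charmul chi D)
  = p.-1%:R * (p%:R * (charmul A D (-1) * \sum_v charmul B D v
                       + (\sum_u charmul A D u) * charmul B D (-1)
                       - charmul A D (-1) * charmul B D (-1))
               - (\sum_u charmul A D u) * (\sum_v charmul B D v)).
Proof. by rewrite sum_gauss4_fiber sum_fiber_rescale sum_rescaled_eval. Qed.

End FourGaussSums.

Theorem corollary2p3 (p : nat) (zeta : algC) (psi : {ffun 'F_p -> algC})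
    (a b c : int) (s : seq {ffun 'F_p -> algC}) :
  prime p -> (p %% 5 = 1)%N -> p.-primitive_root zeta ->
  is_mulchar psi -> char_order psi 5 ->
  ~~ (5 %| a + c)%Z -> ~~ (5 %| b + c)%Z ->
  uniq s -> (forall chi, chi \in s <-> is_mulchar chi) ->
  \sum_(chi <- s)
     gauss zeta (charmul (charinv chi) (charpow psi a))
   * gauss zeta (charmul (charinv chi) (charpow psi b))
   * gauss zeta (charmul chi (charpow psi c))
   * gauss zeta (charmul chi (charpow psi (- (a + b + c))))
  = - (p%:R * (p.-1)%:R).
Proof.
(* p = 1 (mod 5) only serves to make a character psi of order 5 exist. *)
move=> p_pr _ zeta_prim psiP psi_order5 ac_ndvd bc_ndvd s_uniq s_mulchar.
have powP m : is_mulchar (charpow psi m) by exact: charpow_mulchar.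
have triv : charmul (charmul (charpow psi a) (charpow psi b))
                    (charmul (charpow psi c) (charpow psi (- (a + b + c)))) = trivchar p.
  by rewrite !charmul_charpow // -(charpow0 psi); congr charpow; ring.
have psi_m1 m : charpow psi m (-1) = 1.
  by rewrite charpowE ?oppr_eq0 ?oner_eq0 // (mulchar_oppr1 psiP psi_order5) // exp1rz.
have sum_pow0 m : ~~ (5 %| m)%Z -> \sum_x charpow psi m x = 0.
  by move=> m_ndvd; apply: sum_mulchar_eq0 => //; apply: (charpow_neq_triv _ psi_order5).
rewrite (sum_gauss4 p_pr zeta_prim s_uniq s_mulchar) ?powP // !charmul_charpow // !psi_m1.
have -> : a + - (a + b + c) = - (b + c) by ring.
have -> : b + - (a + b + c) = - (a + c) by ring.
rewrite !sum_pow0 ?rpredN //; ring.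
Qed.
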